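(* The representation $\rho$ in the following setting is reducible if and only if $w\ne-2$. Setting: $q$ a root of unity with $n$ odd and $q^4\ne1$ ($N=n$ odd), $\bar N=(N-1)/2$, $k\in\mathbb Z$, $w=-q^{2k}-q^{-2k}$; $V$ has basis $\{u_i:-\bar N\le i\le\bar N\}$, with $u^*_i=u_{-\bar N}$ for $i<-\bar N$, $u^*_i=u_i$ for $|i|\le\bar N$, $u^*_i=u_{\bar N}$ for $i>\bar N$; $\lambda_i=q^{2i}+q^{-2i}$, and for $i\ne0$: $s_i=\frac{q^{2i-k+1}-q^{-2i+k-1}}{q^{2i}-q^{-2i}}$, $s'_i=\frac{q^{2i+2}-q^{-2i-2}}{q^{2i}-q^{-2i}}s_i$, $\beta_i=\frac{2q^{k-1}-2q^{-k+1}}{(q^{2i}-q^{-2i})^3}$; $\rho$ is the representation of $\mathcal S_q(\Sigma_{1,1})$ with $\rho(\alpha_0)u_i=\lambda_iu_i$ ($-\bar N\le i\le0$), $\rho(\alpha_0)u_i=\lambda_iu_i+u_{-i}$ ($0<i\le\bar N$), $\rho(\alpha_\infty)u_i=s_iu_{i+1}+s_{-i}u^*_{i-1}$ ($-\bar N\le i<0$), $\rho(\alpha_\infty)u_0=(q^{k-1}+q^{-k+1})u_{-1}+(q^2-q^{-2})(q^{-k+1}-q^{k-1})u_1$, $\rho(\alpha_\infty)u_i=\beta_iu^*_{-i-1}-\beta_iu_{-i+1}+s'_{-i}u_{i-1}+s'_iu^*_{i+1}$ ($0<i\le\bar N$).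
   Context: $\mathcal S_q(\Sigma_{1,1})$ is the Kauffman bracket skein algebra of the one-punctured torus, generated by the slope $0,1,\infty$ curves $\alpha_0,\alpha_1,\alpha_\infty$; when $q^4\ne1$ a representation is determined by the images of $\alpha_0$ and $\alpha_\infty$. For $q$ a root of unity, $n=\mathrm{ord}(q^2)$ and $N=\mathrm{ord}(q^4)$. (The formulas above are known to define a representation.) *)

From HB Require Import structures.
From mathcomp Require Import all_boot all_order all_algebra all_field.
Set Implicit Arguments. Unset Strict Implicit. Unset Printing Implicit Defensive.
Import Order.TTheory GRing.Theory Num.Theory.
Local Open Scope ring_scope.

(* Basis u_i, -nbar <= i <= nbar, of V, indexed by 'I_(nbar.*2.+1)
   via  a : 'I_(nbar.*2.+1)  <->  i = a - nbar.
   Row vectors: a linear map f is encoded by the matrix whose row a is the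
   coordinate vector of f(u_(a - nbar)); it acts by  v |-> v *m A. *)

Section Rep.
Variables (F : fieldType) (q : F) (nbar : nat) (k : int).

Definition dimV := (nbar.*2).+1.

Definition clampi (t : int) : int :=
  Num.max (- (nbar%:Z)) (Num.min (nbar%:Z) t).

(* coordinate vector of u*_t (equal to u_t when |t| <= nbar) *)
Definition ev (t : int) : 'rV[F]_dimV :=
  delta_mx 0 (inord (absz (clampi t + nbar%:Z)) : 'I_dimV).

Definition lam (i : int) : F := q ^ (2 * i) + q ^ (- (2 * i)).
Definition ss (i : int) : F :=
  (q ^ (2 * i - k + 1) - q ^ (- (2 * i) + k - 1)) / (q ^ (2 * i) - q ^ (- (2 * i))).
Definition ss' (i : int) : F :=
  (q ^ (2 * i + 2) - q ^ (- (2 * i) - 2)) / (q ^ (2 * i) - q ^ (- (2 * i))) * ss i.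
Definition beta (i : int) : F :=
  (2 * q ^ (k - 1) - 2 * q ^ (- k + 1)) / (q ^ (2 * i) - q ^ (- (2 * i))) ^+ 3.

Definition img0 (i : int) : 'rV[F]_dimV :=
  if i <= 0 then lam i *: ev i else lam i *: ev i + ev (- i).

Definition imgInf (i : int) : 'rV[F]_dimV :=
  if i < 0 then ss i *: ev (i + 1) + ss (- i) *: ev (i - 1)
  else if i == 0 then
    (q ^ (k - 1) + q ^ (- k + 1)) *: ev (-1)
    + ((q ^+ 2 - q ^- 2) * (q ^ (- k + 1) - q ^ (k - 1))) *: ev 1
  else beta i *: ev (- i - 1) - beta i *: ev (- i + 1)
       + ss' (- i) *: ev (i - 1) + ss' i *: ev (i + 1).

Definition rho0 : 'M[F]_dimV :=
  \matrix_(a < dimV, b < dimV) img0 (a%:Z - nbar%:Z) 0 b.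
Definition rhoInf : 'M[F]_dimV :=
  \matrix_(a < dimV, b < dimV) imgInf (a%:Z - nbar%:Z) 0 b.

End Rep.

Definition mx_reducible (F : fieldType) (m : nat) (A B : 'M[F]_m) : Prop :=
  exists W : 'M[F]_m, [/\ (0 < \rank W)%N, (\rank W < m)%N, stablemx W A & stablemx W B].

From HB Require Import structures.
From mathcomp Require Import all_boot all_order all_algebra all_field.
From mathcomp Require Import zify ring.
Set Implicit Arguments. Unset Strict Implicit. Unset Printing Implicit Defensive.
Import Order.TTheory GRing.Theory Num.Theory.
Local Open Scope ring_scope.

(* Put N = 2 nb + 1, so that q^2 is a primitive N-th root of unity.  Then
   w = -2 iff lambda_k = 2 iff q^k = q^-k iff N divides k.

   If N does not divide k, then, 2 being invertible modulo N, some c with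
   -nb <= c < nb satisfies 2c = k - 1 mod N.  This kills s_c (hence s'_c, and the
   u_1-coefficient of rho(alpha_infty) u_0 when c = 0), so rho(alpha_infty) never
   raises u_c and the span of the u_s, s <= c, is a proper invariant subspace.

   If N divides k, these coefficients never vanish.  rho(alpha_0) is triangular
   with eigenvalues lambda_i, distinct for distinct |i|, so its eigenvectors are
   the multiples of the u_i with i <= 0, and a nonzero invariant subspace contains
   one of them.  Applying rho(alpha_0) - lambda_(t+1) after rho(alpha_infty) turns
   u_t (t <= 0) into a nonzero multiple of u_(t-1), which leads down to u_(-nb);
   from there rho(alpha_infty) raises u_t to u_(t+1) modulo lower terms, so the
   subspace is everything. *)

Lemma dvdz_small (N : nat) (x : int) : (`|x| < N)%N -> (N%:Z %| x)%Z = (x == 0).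
Proof.
move=> ltxN; apply/idP/eqP => [|->]; last exact: dvdz0.
rewrite dvdzE absz_nat; apply: contraTeq => x0.
by apply/negP => /dvdn_leq; rewrite absz_gt0 x0 leqNgt ltxN => /(_ isT).
Qed.

Lemma prim_root_sqr_neq0 (F : fieldType) (N : nat) (q : F) :
  N.-primitive_root (q ^+ 2) -> q != 0.
Proof.
move=> prim; apply/eqP => q0; move: (prim_expr_order prim).
rewrite q0 expr0n /= expr0n gtn_eqF ?(prim_order_gt0 prim) //.
by move/eqP; rewrite eq_sym oner_eq0.
Qed.

Lemma prim_root_sqr_expfzN (F : fieldType) (N : nat) (q : F)
    (prim : N.-primitive_root (q ^+ 2)) (x : int) :
  (q ^ x == q ^ (- x)) = (N%:Z %| x)%Z.
Proof.
have q0 := prim_root_sqr_neq0 prim.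
have qx0 : q ^ x != 0 by rewrite expfz_neq0.
rewrite -invr_expz -(inj_eq (mulfI qx0)) mulfV // -expfzDr //.
rewrite (_ : x + x = (2 : int) * x); last by ring.
rewrite -exprz_exp; change (q ^ (2 : int)) with (q ^+ 2).
by case: x {qx0} => m /=; rewrite ?invr_eq1 -(prim_order_dvd prim) dvdzE.
Qed.

Lemma submx_scale_add_cancel (F : fieldType) (m1 m2 n : nat) (a : F)
    (A B : 'M[F]_(m1, n)) (C : 'M[F]_(m2, n)) :
  a != 0 -> ((a *: A + B)%R <= C)%MS -> (B <= C)%MS -> (A <= C)%MS.
Proof.
move=> a0 sABC sBC; rewrite -(eqmx_scale _ a0) -[a *: A](addrK B).
by apply: addmx_sub; rewrite ?eqmx_opp.
Qed.

Section Basis.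
Variables (F : fieldType) (nb : nat).
Local Notation N := (dimV nb).
Local Notation u := (ev F nb).

Lemma leq_ord_dimV (i : 'I_N) : (i <= nb.*2)%N.
Proof. by rewrite -ltnS. Qed.

Lemma clampi_id (t : int) : - (nb%:Z) <= t -> t <= nb%:Z -> clampi nb t = t.
Proof. by move=> *; rewrite /clampi; lia. Qed.

Definition ordz (t : int) : 'I_N := inord `|t + nb%:Z|.

Lemma ordzK (t : int) : - (nb%:Z) <= t -> t <= nb%:Z -> (ordz t)%:Z - nb%:Z = t.
Proof. by move=> *; rewrite /ordz inordK; lia. Qed.

Lemma ev_ordz (t : int) : - (nb%:Z) <= t -> t <= nb%:Z -> u t = delta_mx 0 (ordz t).
Proof. by move=> *; rewrite /ev clampi_id. Qed.

Lemma ev_ord (i : 'I_N) : u (i%:Z - nb%:Z) = delta_mx 0 i.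
Proof.
have le_i := leq_ord_dimV i.
rewrite ev_ordz; try lia; congr delta_mx; apply: val_inj.
by rewrite /= /ordz subrK absz_nat inordK.
Qed.

Lemma ev_clamp_low (t : int) : t <= - (nb%:Z) -> u t = u (- (nb%:Z)).
Proof.
by move=> t_le; rewrite /ev (_ : clampi nb t = clampi nb (- (nb%:Z))) // /clampi; lia.
Qed.

Lemma val_rev_ord_dimV (i : 'I_N) : rev_ord i = (nb.*2 - i)%N :> nat.
Proof. by []. Qed.

Lemma rev_ord_centered (i : 'I_N) : (rev_ord i)%:Z - nb%:Z = - (i%:Z - nb%:Z).
Proof. by have := leq_ord_dimV i; rewrite /= /dimV; lia. Qed.

Lemma ev_mulmx (t : int) (M : 'M[F]_N) : - (nb%:Z) <= t -> t <= nb%:Z ->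
  u t *m M = row (ordz t) M.
Proof. by move=> *; rewrite ev_ordz // -rowE. Qed.

End Basis.

Section Lambda.
Variables (F : fieldType) (q : F).
Hypothesis q0 : q != 0.

Lemma lamN (t : int) : lam q (- t) = lam q t.
Proof. by rewrite /lam mulrN opprK addrC. Qed.

Lemma lam_sub (a b : int) : lam q a - lam q b =
  (q ^ (a - b) - q ^ (b - a)) * (q ^ (a + b) - q ^ (- (a + b))).
Proof.
rewrite /lam mulrBl !mulrBr -!expfzDr //.
have -> : a - b + (a + b) = 2 * a by ring.
have -> : a - b + - (a + b) = - (2 * b) by ring.
have -> : b - a + (a + b) = 2 * b by ring.
have -> : b - a + - (a + b) = - (2 * a) by ring.
by ring.
Qed.

Lemma lam_sub2 (t : int) : lam q t - 2 = (q ^ t - q ^ (- t)) ^+ 2.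
Proof.
rewrite sqrrB !expr2 -!expfzDr // subrr expr0z /lam.
have -> : t + t = 2 * t by ring.
have -> : - t + - t = - (2 * t) by ring.
by ring.
Qed.

End Lambda.

Section Rho.
Variables (F : fieldType) (q : F) (nb : nat) (k : int).
Local Notation N := (dimV nb).
Local Notation u := (ev F nb).
Local Notation A := (rho0 q nb).
Local Notation B := (rhoInf q nb k).

Lemma rho0_ev (t : int) : - (nb%:Z) <= t -> t <= nb%:Z -> u t *m A = img0 q nb t.
Proof. by move=> *; rewrite ev_mulmx //; apply/rowP => b; rewrite !mxE ordzK. Qed.

Lemma rhoInf_ev (t : int) : - (nb%:Z) <= t -> t <= nb%:Z -> u t *m B = imgInf q nb k t.
Proof. by move=> *; rewrite ev_mulmx //; apply/rowP => b; rewrite !mxE ordzK. Qed.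

Lemma rho0_ev_nonpos (t : int) : - (nb%:Z) <= t -> t <= 0 -> u t *m A = lam q t *: u t.
Proof. by move=> t_ge t_le0; rewrite rho0_ev /img0 ?t_le0 //; lia. Qed.

Lemma rho0_ev_pos (t : int) : 0 < t -> t <= nb%:Z -> u t *m A = lam q t *: u t + u (- t).
Proof.
move=> t_gt0 t_le; rewrite rho0_ev /img0; [|lia|lia].
by have -> : (t <= 0) = false by lia.
Qed.

Lemma rho0_coef (v : 'rV[F]_N) (b : 'I_N) :
  (v *m A) 0 b = lam q (b%:Z - nb%:Z) * v 0 b + (if (b < nb)%N then v 0 (rev_ord b) else 0).
Proof.
have le_b := leq_ord_dimV b.
have A_ab (a : 'I_N) : A a b = lam q (a%:Z - nb%:Z) * (a == b)%:R
                              + (nb < a)%N%:R * (rev_ord a == b)%:R.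
  rewrite mxE /img0 ev_ord; have le_a := leq_ord_dimV a.
  case: ifP => a_le.
    by rewrite (_ : (nb < a)%N = false) ?mxE ?eqxx ?mul0r ?addr0 1?eq_sym //; lia.
  rewrite (_ : (nb < a)%N = true); last by lia.
  by rewrite -rev_ord_centered ev_ord !mxE eqxx mul1r eq_sym (eq_sym b).
rewrite mxE; under eq_bigr => a _ do rewrite A_ab mulrDr.
rewrite big_split /= (bigD1 b) //= eqxx mulr1 big1 ?addr0; last first.
  by move=> a /negbTE ->; rewrite !mulr0.
rewrite mulrC; congr (_ + _).
rewrite (bigD1 (rev_ord b)) //= rev_ordK eqxx mulr1 big1 ?addr0; last first.
  move=> a ab; rewrite (_ : (rev_ord a == b) = false) ?mulr0 //.
  by apply/negbTE; apply: contra ab => /eqP <-; rewrite rev_ordK.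
case: ifP => b_lt.
  by rewrite (_ : (nb < rev_ord b)%N = true) ?mulr1 // val_rev_ord_dimV; lia.
by rewrite (_ : (nb < rev_ord b)%N = false) ?mulr0 // val_rev_ord_dimV; lia.
Qed.

End Rho.

Section PrimitiveRoot.
Variables (F : fieldType) (q : F) (nb : nat).
Local Notation N := (dimV nb).
Hypothesis q2_prim : N.-primitive_root (q ^+ 2).

Lemma dvdz_dimV (x : int) : (`|x| <= nb.*2)%N -> (N%:Z %| x)%Z = (x == 0).
Proof. by move=> x_le; rewrite dvdz_small. Qed.

Lemma expfz_subN_eq0 (a b : int) : b = - a -> (N%:Z %| a)%Z -> q ^ a - q ^ b = 0.
Proof. by move=> -> ?; apply/eqP; rewrite subr_eq0 (prim_root_sqr_expfzN q2_prim). Qed.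

Lemma expfz_subN_neq0 (a b : int) : b = - a -> ~~ (N%:Z %| a)%Z -> q ^ a - q ^ b != 0.
Proof. by move=> -> ?; rewrite subr_eq0 (prim_root_sqr_expfzN q2_prim). Qed.

Lemma expfz_subN_neq0_small (a b : int) :
  b = - a -> a != 0 -> (`|a| <= nb.*2)%N -> q ^ a - q ^ b != 0.
Proof. by move=> ba a0 a_le; rewrite expfz_subN_neq0 // dvdz_dimV. Qed.

Lemma lam_inj (a b : int) : (`|a| <= nb)%N -> (`|b| <= nb)%N ->
  lam q a = lam q b -> a = b \/ a = - b.
Proof.
move=> a_le b_le /eqP; rewrite -subr_eq0 lam_sub ?(prim_root_sqr_neq0 q2_prim) //.
rewrite -[b - a]opprB mulf_eq0 !subr_eq0 !(prim_root_sqr_expfzN q2_prim) // !dvdz_dimV; lia.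
Qed.

End PrimitiveRoot.

Lemma stablemx_eigenvector (C : numClosedFieldType) (n : nat) (W M : 'M[C]_n) :
  stablemx W M -> (0 < \rank W)%N ->
  exists v : 'rV_n, exists mu, [/\ v != 0, (v <= W)%MS & v *m M = mu *: v].
Proof.
move=> sWM rW; set V := row_base W.
have [mu /eigenvalueP [x xV x0]] := eigenvalue_closed (conjmx V M) rW.
exists (x *m V), mu; split.
- apply: contra x0 => /eqP xV0; apply/eqP; apply: (row_free_inj (row_base_free W)).
  by rewrite xV0 mul0mx.
- by rewrite (submx_trans (submxMl _ _)) // eq_row_base.
- have VM : V *m M = conjmx V M *m V by rewrite /conjmx mulmxKpV // stablemx_row_base.
  by rewrite -mulmxA VM mulmxA xV scalemxAl.
Qed.

Section Rho0Eigenvector.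
Variables (F : fieldType) (q : F) (nb : nat).
Local Notation N := (dimV nb).
Hypothesis q2_prim : N.-primitive_root (q ^+ 2).
Variables (v : 'rV[F]_N) (mu : F).
Hypothesis v_eigen : v *m rho0 q nb = mu *: v.

Let coef_eq (b : 'I_N) : lam q (b%:Z - nb%:Z) * v 0 b
  + (if (b < nb)%N then v 0 (rev_ord b) else 0) = mu * v 0 b.
Proof. by rewrite -(rho0_coef q v b) v_eigen mxE. Qed.

Lemma rho0_eigen_coef_pos (b : 'I_N) : (nb < b)%N -> v 0 b = 0.
Proof.
move=> b_gt; have := coef_eq b; rewrite ifN ?addr0; last by rewrite -leqNgt ltnW.
move/eqP; rewrite -subr_eq0 -mulrBl mulf_eq0 subr_eq0 => /orP[/eqP lam_b|/eqP //].
have rb_lt : (rev_ord b < nb)%N.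
  by have := leq_ord_dimV b; rewrite val_rev_ord_dimV; lia.
have := coef_eq (rev_ord b); rewrite rb_lt rev_ordK rev_ord_centered lamN lam_b.
by move/(canRL (addKr _)); rewrite addNr.
Qed.

Let rev_coef0 (b : 'I_N) : (if (b < nb)%N then v 0 (rev_ord b) else 0) = 0.
Proof.
by case: ifP => // b_lt; apply: rho0_eigen_coef_pos; rewrite val_rev_ord_dimV; lia.
Qed.

Let diag_coef (b : 'I_N) : (lam q (b%:Z - nb%:Z) - mu) * v 0 b = 0.
Proof. by rewrite mulrBl -(coef_eq b) rev_coef0 addr0 subrr. Qed.

Lemma rho0_eigenvector : v != 0 ->
  exists i : 'I_N, [/\ (i <= nb)%N, v 0 i != 0 & v = v 0 i *: delta_mx 0 i].
Proof.
move=> v0; have /existsP [i vi0] : [exists i, v 0 i != 0].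
  apply: contraNT v0 => /existsPn vi0; apply/eqP/rowP => j.
  by rewrite mxE; apply/eqP/negbNE/vi0.
have i_le : (i <= nb)%N by rewrite leqNgt; apply: contra vi0 => /rho0_eigen_coef_pos ->.
have /eqP := diag_coef i; rewrite mulf_eq0 (negbTE vi0) orbF subr_eq0 => /eqP mu_i.
exists i; split=> //; apply/rowP => b; rewrite !mxE eqxx /=.
have [-> | b_i] := eqVneq b i; first by rewrite mulr1.
rewrite mulr0; have [b_gt | b_le] := ltnP nb b; first exact: rho0_eigen_coef_pos.
have /eqP := diag_coef b; rewrite -mu_i mulf_eq0 subr_eq0 => /orP[/eqP lam_bi | /eqP //].
have b_ne_i : b <> i :> nat by move/val_inj; apply/eqP.
by case: (lam_inj q2_prim _ _ lam_bi); lia.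
Qed.

End Rho0Eigenvector.

Section Reducible.
Variables (F : fieldType) (q : F) (nb : nat) (k c : int).
Local Notation N := (dimV nb).
Local Notation u := (ev F nb).
Hypothesis q2_prim : N.-primitive_root (q ^+ 2).
Hypotheses (c_ge : - (nb%:Z) <= c) (c_lt : c < nb%:Z).
Hypothesis c_root : (N%:Z %| 2 * c - k + 1)%Z.

Lemma ss_root : ss q k c = 0.
Proof. by rewrite /ss (expfz_subN_eq0 q2_prim (a := 2 * c - k + 1)) ?mul0r //; ring. Qed.

(* The rows of [pid_mx m] are the u_s with s <= c. *)
Let m := absz (c + nb%:Z + 1).
Let W : 'M[F]_N := pid_mx m.

Let delta_sub_lower (i : 'I_N) : (i < m)%N -> ((delta_mx 0 i : 'rV_N) <= W)%MS.
Proof.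
move=> i_lt; suff -> : delta_mx 0 i = delta_mx 0 i *m W :> 'rV_N by apply: submxMl.
by rewrite -rowE; apply/rowP => j; rewrite !mxE eqxx i_lt andbT eq_sym.
Qed.

Let ev_sub_lower (s : int) : s <= c -> (u s <= W)%MS.
Proof.
move=> s_le; apply: delta_sub_lower; rewrite inordK /clampi; lia.
Qed.

Let scale_ev_sub_lower (a : F) (s : int) : (s <= c) || (a == 0) -> (a *: u s <= W)%MS.
Proof.
case/orP => [s_le | /eqP ->]; first exact/scalemx_sub/ev_sub_lower.
by rewrite scale0r sub0mx.
Qed.

Let stablemx_lower (M : 'M[F]_N) :
  (forall t, - (nb%:Z) <= t -> t <= c -> (u t *m M <= W)%MS) -> stablemx W M.
Proof.
move=> uM; apply/row_subP => i; rewrite row_mul.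
have [i_lt | i_ge] := ltnP i m.
  rewrite (_ : row i W = delta_mx 0 i); last first.
    by apply/rowP => j; rewrite !mxE i_lt andbT eqxx eq_sym.
  by rewrite -ev_ord; apply: uM; lia.
rewrite (_ : row i W = 0) ?mul0mx ?sub0mx //.
by apply/rowP => j; rewrite !mxE ltnNge i_ge andbF.
Qed.

Let stablemx_rho0_lower : stablemx W (rho0 q nb).
Proof.
apply: stablemx_lower => t t_ge t_le; have [t_le0 | t_gt0] := lerP t 0.
  by rewrite rho0_ev_nonpos // scale_ev_sub_lower ?t_le.
rewrite rho0_ev_pos; try lia.
by apply: addmx_sub; [apply: scale_ev_sub_lower; rewrite t_le | apply: ev_sub_lower; lia].
Qed.

Let stablemx_rhoInf_lower : stablemx W (rhoInf q nb k).
Proof.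
apply: stablemx_lower => t t_ge t_le; rewrite rhoInf_ev /imgInf; [|lia|lia].
have [-> | t_ne_c] := eqVneq t c; last first.
  by case: ifP => ?; [|case: ifP => ?]; rewrite -?scaleNr; repeat apply: addmx_sub;
    apply: scale_ev_sub_lower; apply/orP; left; lia.
case: ifP => [c_lt0 | c_ge0]; last case: ifP => [/eqP c0 | c_ne0].
- by apply: addmx_sub; apply: scale_ev_sub_lower; rewrite ?ss_root ?eqxx ?orbT //; lia.
- have u1_coef0 : q ^ (- k + 1) - q ^ (k - 1) = 0.
    by apply: (expfz_subN_eq0 q2_prim); [ring | move: c_root; rewrite c0 mulr0 add0r].
  by apply: addmx_sub; apply: scale_ev_sub_lower;
    rewrite ?u1_coef0 ?mulr0 ?eqxx ?orbT //; lia.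
- rewrite -scaleNr; repeat apply: addmx_sub; apply: scale_ev_sub_lower;
    rewrite /ss' ?ss_root ?mulr0 ?eqxx ?orbT //; lia.
Qed.

Lemma mx_reducible_of_ss_root : mx_reducible (rho0 q nb) (rhoInf q nb k).
Proof.
have rank_W : \rank W = m by rewrite rank_pid_mx // /m /dimV; lia.
exists W; rewrite rank_W /m.
split; [lia | rewrite /dimV; lia | exact: stablemx_rho0_lower | exact: stablemx_rhoInf_lower].
Qed.

End Reducible.

Lemma exists_ss_root (nb : nat) (k : int) : ~~ ((dimV nb)%:Z %| k)%Z ->
  exists c : int, [/\ - (nb%:Z) <= c, c < nb%:Z & ((dimV nb)%:Z %| 2 * c - k + 1)%Z].
Proof.
move=> k_ndvd; set N := dimV nb.
have NE : N%:Z = 2 * nb%:Z + 1 by rewrite /N /dimV; lia.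
(* [nb + 1] is the inverse of [2] modulo [N]. *)
set M := (k - 1) * (nb%:Z + 1) + nb%:Z.
have r_ge0 : 0 <= (M %% N)%Z by rewrite modz_ge0 // NE; lia.
have r_lt : (M %% N)%Z < N%:Z by rewrite ltz_pmod // NE; lia.
have := divz_eq M N; move: (M %/ N)%Z (M %% N)%Z r_ge0 r_lt => Q r r_ge0 r_lt MQr.
have c_root : 2 * (r - nb%:Z) - k + 1 = (k - 1 - 2 * Q) * N%:Z.
  have -> : r = M - Q * N%:Z by rewrite MQr; ring.
  by rewrite /M NE; ring.
exists (r - nb%:Z); split; [lia | | by apply/dvdzP; exists (k - 1 - 2 * Q)].
rewrite ltNge; apply: contra k_ndvd => c_ge; apply/dvdzP; exists (2 - k + 2 * Q).
have r_eq : r = 2 * nb%:Z by lia.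
have -> : (2 - k + 2 * Q) * N%:Z = N%:Z - (k - 1 - 2 * Q) * N%:Z by ring.
by rewrite -c_root r_eq NE; ring.
Qed.

Section Irreducible.
Variables (F : fieldType) (q : F) (nb : nat) (k : int).
Local Notation N := (dimV nb).
Local Notation u := (ev F nb).
Local Notation A := (rho0 q nb).
Local Notation B := (rhoInf q nb k).
Hypothesis q2_prim : N.-primitive_root (q ^+ 2).
Hypothesis nb_gt0 : (0 < nb)%N.
Hypothesis k_dvd : (N%:Z %| k)%Z.

Lemma ss_neq0 (t : int) : t != 0 -> - (nb%:Z) <= t -> t < nb%:Z -> ss q k t != 0.
Proof.
move=> t0 t_ge t_lt; rewrite /ss mulf_neq0 ?invr_neq0 //.
  apply: (expfz_subN_neq0 q2_prim (a := 2 * t - k + 1)); first by ring.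
  rewrite (_ : 2 * t - k + 1 = 2 * t + 1 - k); last by ring.
  by rewrite rpredBr // dvdz_dimV; lia.
by apply: (expfz_subN_neq0_small q2_prim (a := 2 * t)); [ring | lia | lia].
Qed.

Lemma ss'_neq0 (t : int) : 0 < t -> t < nb%:Z -> ss' q k t != 0.
Proof.
move=> t_gt0 t_lt; rewrite /ss' mulf_neq0 ?ss_neq0 //; try lia.
rewrite mulf_neq0 ?invr_neq0 //.
  by apply: (expfz_subN_neq0_small q2_prim (a := 2 * t + 2)); [ring | lia | lia].
by apply: (expfz_subN_neq0_small q2_prim (a := 2 * t)); [ring | lia | lia].
Qed.

Lemma coef_u0_neq0 : (q ^+ 2 - q ^- 2) * (q ^ (- k + 1) - q ^ (k - 1)) != 0.
Proof.
rewrite mulf_neq0 //.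
  by have := expfz_subN_neq0_small q2_prim (a := 2) (b := -2); apply; lia.
apply: (expfz_subN_neq0 q2_prim (a := - k + 1)); first by ring.
by rewrite addrC rpredBr // dvdz_dimV; lia.
Qed.

Variable W : 'M[F]_N.
Hypotheses (sA : stablemx W A) (sB : stablemx W B).

Lemma ev_sub_pred (t : int) : - (nb%:Z) < t -> t <= 0 ->
  (u t <= W)%MS -> (u (t - 1) <= W)%MS.
Proof.
move=> t_gt t_le0 utW.
have sBA : stablemx W (B *m (A - (lam q (t + 1))%:M)).
  by rewrite stablemxM ?stablemxD ?stablemxN ?stablemxC.
have := submx_trans (submxMr _ utW) sBA.
rewrite mulmxA mulmxBr mul_mx_scalar rhoInf_ev /imgInf; [|lia|lia].
have [t_lt0 | t_ge0] := ltrP t 0.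
  rewrite mulmxDl -!scalemxAl !rho0_ev_nonpos; [move=> h|lia..].
  set a := ss q k (- t) * (lam q (t - 1) - lam q (t + 1)).
  have a0 : a != 0.
    rewrite mulf_neq0 ?ss_neq0 ?lam_sub ?(prim_root_sqr_neq0 q2_prim) //; try lia.
    rewrite mulf_neq0 //; apply: (expfz_subN_neq0_small q2_prim); (ring || lia).
  rewrite -(eqmx_scale _ a0); apply: submx_trans h.
  rewrite [X in (_ <= X)%MS](_ : _ = a *: u (t - 1)) ?submx_refl //.
  by apply/rowP => x; rewrite !mxE /a; ring.
have -> : t = 0 by lia.
rewrite eqxx add0r mulmxDl -!scalemxAl rho0_ev_nonpos ?rho0_ev_pos ?lamN; [move=> h|lia..].
rewrite -(eqmx_scale _ coef_u0_neq0); apply: submx_trans h.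
rewrite [X in (_ <= X)%MS]
  (_ : _ = ((q ^+ 2 - q ^- 2) * (q ^ (- k + 1) - q ^ (k - 1))) *: u (-1)) ?submx_refl //.
by apply/rowP => x; rewrite !mxE; ring.
Qed.

Lemma ev_sub_succ (t : int) : - (nb%:Z) <= t -> t < nb%:Z ->
  (forall s, s <= t -> (u s <= W)%MS) -> (u (t + 1) <= W)%MS.
Proof.
move=> t_ge t_lt lowW.
have := submx_trans (submxMr B (lowW t (lexx t))) sB.
rewrite rhoInf_ev /imgInf; [|lia|lia].
have [t_lt0 | t_ge0] := ltrP t 0.
  move=> /submx_scale_add_cancel; apply; first by apply: ss_neq0; lia.
  by apply: scalemx_sub; apply: lowW; lia.
have [-> | t_neq0] := eqVneq t 0.
  rewrite addrC => /submx_scale_add_cancel; apply; first exact: coef_u0_neq0.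
  by apply: scalemx_sub; apply: lowW; lia.
rewrite addrC => /submx_scale_add_cancel; apply; first by apply: ss'_neq0; lia.
rewrite -scaleNr; repeat apply: addmx_sub; apply: scalemx_sub; apply: lowW; lia.
Qed.

Lemma ev_sub_min (i : nat) : (i <= nb)%N ->
  (u (i%:Z - nb%:Z) <= W)%MS -> (u (- (nb%:Z)) <= W)%MS.
Proof.
elim: i => [|i IHi] i_le uW; first by rewrite sub0r in uW.
apply: IHi; first lia.
rewrite (_ : i%:Z - nb%:Z = (i.+1)%:Z - nb%:Z - 1); last by lia.
by apply: ev_sub_pred uW; lia.
Qed.

Lemma ev_sub_upto (d : nat) : (u (- (nb%:Z)) <= W)%MS -> (d <= nb.*2)%N ->
  forall s, s <= d%:Z - nb%:Z -> (u s <= W)%MS.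
Proof.
move=> minW; elim: d => [|d IHd] d_le s s_le.
  by rewrite ev_clamp_low //; lia.
have [s_le' | s_gt] := lerP s (d%:Z - nb%:Z); first by apply: IHd; lia.
rewrite (_ : s = d%:Z - nb%:Z + 1); last by lia.
by apply: ev_sub_succ; [lia | lia | apply: IHd; lia].
Qed.

Lemma row_full_of_ev_nonpos_sub (i : 'I_N) : (i <= nb)%N ->
  ((delta_mx 0 i : 'rV_N) <= W)%MS -> row_full W.
Proof.
rewrite -ev_ord => i_le /(ev_sub_min i_le) minW.
rewrite -sub1mx; apply/row_subP => j; rewrite row1 -ev_ord.
by apply: (ev_sub_upto minW (leq_ord_dimV j)).
Qed.

End Irreducible.

Lemma rho_not_reducible (C : numClosedFieldType) (q : C) (nb : nat) (k : int) :
  (dimV nb).-primitive_root (q ^+ 2) -> (0 < nb)%N -> ((dimV nb)%:Z %| k)%Z ->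
  ~ mx_reducible (rho0 q nb) (rhoInf q nb k).
Proof.
move=> q2_prim nb_gt0 k_dvd [W [rW_gt0 rW_lt sA sB]].
have [v [mu [v0 vW v_eigen]]] := stablemx_eigenvector sA rW_gt0.
have [i [i_le vi0 vE]] := rho0_eigenvector q2_prim v_eigen v0.
have : row_full W.
  apply: (row_full_of_ev_nonpos_sub q2_prim nb_gt0 k_dvd sA sB i_le).
  by rewrite -(eqmx_scale _ vi0) -vE.
by rewrite /row_full => /eqP W_full; rewrite W_full ltnn in rW_lt.
Qed.

Theorem mainTheorem12 (q : algC) (n : nat) (k : int) :
  n.-primitive_root (q ^+ 2) -> odd n -> q ^+ 4 != 1 ->
  (mx_reducible (rho0 q n./2) (rhoInf q n./2 k)
   <-> - q ^ (2 * k) - q ^ (- (2 * k)) != -2).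
Proof.
move=> q2_prim odd_n q4_neq1; set nb := n./2.
have nE : n = dimV nb by rewrite -[LHS]odd_double_half odd_n add1n.
rewrite nE in q2_prim.
have nb_gt0 : (0 < nb)%N.
  rewrite lt0n; apply: contra q4_neq1 => /eqP nb0.
  have q2_1 : q ^+ 2 = 1 by move: (prim_expr_order q2_prim); rewrite nb0 expr1.
  by rewrite -[4%N]/(2 * 2)%N exprM q2_1 expr1n.
have -> : - q ^ (2 * k) - q ^ (- (2 * k)) = - lam q k by rewrite /lam opprD.
rewrite eqr_opp -subr_eq0 lam_sub2 ?(prim_root_sqr_neq0 q2_prim) //.
rewrite sqrf_eq0 subr_eq0 (prim_root_sqr_expfzN q2_prim).
split=> [red | /exists_ss_root [c [c_ge c_lt c_root]]].
  by apply/negP => k_dvd; apply: (rho_not_reducible q2_prim nb_gt0 k_dvd red).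
exact: mx_reducible_of_ss_root q2_prim c_ge c_lt c_root.
Qed.
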